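(* Let $n\ge1$ and $w\in\mathfrak S_n\subset\widehat{\mathfrak S}_n$. Let $\gamma\in\widehat{\mathfrak S}_n$ be translation by $-\rho=(0,-1,\dots,1-n)$. Then there are bijections \[ \alpha:\operatorname{Inv}(w)\to\operatorname{Inv}_0(\gamma^{-1}w\gamma),\quad (i,j)\mapsto(i,\,j+(j-i)n), \] \[ \beta:\operatorname{Inv}(w)\to\operatorname{Inv}_\infty(\gamma^{-1}w\gamma),\quad (i,j)\mapsto(i,\,j+(j-i+1)n). \]
   Context: $\widehat{\mathfrak S}_n$ (extended affine symmetric group) is the group of bijections $w:\mathbb Z\to\mathbb Z$ with $w(i+n)=w(i)+n$ for all $i$, under composition; $\mathfrak S_n$ embeds as those $w$ permuting $\{1,\dots,n\}$. For $\beta\in\mathbb Z^n$, translation by $\beta$ is $i\mapsto i+n\beta_{i\bmod n}$; thus $\gamma(i)=i+n(1-i)$ for $1\le i\le n$. For an affine permutation $u$, $\operatorname{Inv}(u)=\{(i,j)\in\{1,\dots,n\}\times\mathbb Z: i<j,\ u(i)>u(j)\}$. An inversion $(i,j)$ is vanishing if $j-i\equiv0\bmod(n+1)$ and singular if $j-i\equiv n\bmod(n+1)$; $\operatorname{Inv}_0(u)$ and $\operatorname{Inv}_\infty(u)$ denote the sets of vanishing and singular inversions. *)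

From Stdlib Require Import ZArith Lia.
Open Scope Z_scope.

(* Extended affine symmetric group: bijections w : Z -> Z with w(i+n) = w(i)+n. *)
Definition is_affine_perm (n : Z) (w : Z -> Z) : Prop :=
  (forall x y, w x = w y -> x = y) /\
  (forall y, exists x, w x = y) /\
  (forall i, w (i + n) = w i + n).

(* The embedding S_n ⊂ \hat S_n: affine permutations permuting {1,...,n}. *)
Definition in_fin_sym (n : Z) (w : Z -> Z) : Prop :=
  is_affine_perm n w /\ (forall i, 1 <= i <= n -> 1 <= w i <= n).

Definition residue (n i : Z) : Z := (i - 1) mod n + 1.

(* translation by beta (indexed by 1..n): i |-> i + n * beta_(i mod n) *)
Definition translation (n : Z) (beta : Z -> Z) (i : Z) : Z :=
  i + n * beta (residue n i).

(* gamma = translation by -rho = (0,-1,...,1-n), i.e. beta_k = 1 - k *)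
Definition gamma (n : Z) : Z -> Z := translation n (fun k => 1 - k).
Definition gamma_inv (n : Z) : Z -> Z := translation n (fun k => k - 1).

Lemma residue_shift n i k : 0 < n -> residue n (i + n * k) = residue n i.
Proof.
  intros Hn. unfold residue. f_equal.
  replace (i + n * k - 1) with ((i - 1) + k * n) by ring.
  apply Z_mod_plus_full.
Qed.

Lemma gamma_inv_gamma n i : 0 < n -> gamma_inv n (gamma n i) = i.
Proof.
  intros Hn. unfold gamma_inv, gamma, translation.
  rewrite residue_shift by exact Hn. ring.
Qed.

Lemma gamma_gamma_inv n i : 0 < n -> gamma n (gamma_inv n i) = i.
Proof.
  intros Hn. unfold gamma_inv, gamma, translation.
  rewrite residue_shift by exact Hn. ring.
Qed.

Definition conj_gamma (n : Z) (w : Z -> Z) : Z -> Z :=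
  fun i => gamma_inv n (w (gamma n i)).

Definition Inv (n : Z) (u : Z -> Z) (p : Z * Z) : Prop :=
  1 <= fst p <= n /\ fst p < snd p /\ u (snd p) < u (fst p).

Definition vanishing (n : Z) (p : Z * Z) : Prop := (snd p - fst p) mod (n + 1) = 0.
Definition singular (n : Z) (p : Z * Z) : Prop := (snd p - fst p) mod (n + 1) = n.

Definition Inv0 (n : Z) (u : Z -> Z) (p : Z * Z) : Prop := Inv n u p /\ vanishing n p.
Definition Inv_inf (n : Z) (u : Z -> Z) (p : Z * Z) : Prop := Inv n u p /\ singular n p.

Definition bij_between (A B : Z * Z -> Prop) (f : Z * Z -> Z * Z) : Prop :=
  (forall p, A p -> B (f p)) /\
  (forall p q, A p -> A q -> f p = f q -> p = q) /\
  (forall q, B q -> exists p, A p /\ f p = q).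

Definition alpha_map (n : Z) (p : Z * Z) : Z * Z :=
  (fst p, snd p + (snd p - fst p) * n).
Definition beta_map (n : Z) (p : Z * Z) : Z * Z :=
  (fst p, snd p + (snd p - fst p + 1) * n).

(* Conjugating w by gamma sends x to x + (n+1)(w r - r), where r is the residue of x
   in {1,...,n}.  Hence, for c in {0,1}, the map (i,j) |-> (i, j + (j-i+c) n), which
   preserves residues and moves j - i into the class c n mod (n+1), multiplies the
   differences j - i and w j - w i by n + 1 and then adds c n < n + 1; this preserves
   the sign of w j - w i, so inversions of w correspond exactly to inversions of
   gamma^-1 w gamma whose difference is congruent to c n, i.e. vanishing ones for
   c = 0 and singular ones for c = 1. *)
From Stdlib Require Import ZArith Lia.
Open Scope Z_scope.

Lemma bij_between_iff (A A' B B' : Z * Z -> Prop) (f f' : Z * Z -> Z * Z) :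
  (forall p, A p <-> A' p) -> (forall q, B q <-> B' q) -> (forall p, f p = f' p) ->
  bij_between A B f -> bij_between A' B' f'.
Proof.
  intros HA HB Hf [Hmaps [Hinj Hsurj]]; repeat split.
  - intros p Hp. apply HB. rewrite <- Hf. apply Hmaps, HA, Hp.
  - intros p q Hp Hq E. apply Hinj; [apply HA.. |]; auto. now rewrite !Hf.
  - intros q Hq. destruct (Hsurj q (proj2 (HB q) Hq)) as [p [Hp E]].
    exists p. split; [apply HA, Hp | now rewrite <- Hf].
Qed.

Lemma mul_add_neg_iff (m k r : Z) : 0 <= r < m -> (m * k + r < 0 <-> k < 0).
Proof. intros Hr. split; intros H; nia. Qed.

Lemma periodic_mul (n : Z) (w : Z -> Z) :
  (forall i, w (i + n) = w i + n) -> forall i k, w (i + n * k) = w i + n * k.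
Proof.
  intros hp i k. induction k using Z.peano_ind.
  - now rewrite !Z.mul_0_r, !Z.add_0_r.
  - rewrite Z.mul_succ_r, Z.add_assoc, hp, IHk. ring.
  - specialize (hp (i + n * Z.pred k)).
    rewrite <- Z.add_assoc, <- Z.mul_succ_r, Z.succ_pred in hp. lia.
Qed.

Lemma residue_small (n s : Z) : 1 <= s <= n -> residue n s = s.
Proof. intros H. unfold residue. rewrite Z.mod_small by lia. ring. Qed.

Lemma residue_bound (n x : Z) : 1 <= n -> 1 <= residue n x <= n.
Proof. intros H. unfold residue. pose proof (Z.mod_pos_bound (x - 1) n). lia. Qed.

Lemma residue_decomp (n x : Z) : 1 <= n -> x = residue n x + n * ((x - 1) / n).
Proof. intros H. unfold residue. pose proof (Z.div_mod (x - 1) n). lia. Qed.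

Lemma periodic_eq_residue (n : Z) (w : Z -> Z) :
  1 <= n -> (forall i, w (i + n) = w i + n) ->
  forall x, w x = w (residue n x) + (x - residue n x).
Proof.
  intros hn hp x. rewrite (residue_decomp n x hn) at 1 3.
  rewrite (periodic_mul n w hp). ring.
Qed.

Definition shift_map (n c : Z) (p : Z * Z) : Z * Z :=
  (fst p, snd p + (snd p - fst p + c) * n).

Lemma shift_map_inj (n c : Z) (p q : Z * Z) :
  n + 1 <> 0 -> shift_map n c p = shift_map n c q -> p = q.
Proof.
  destruct p as [i j], q as [i' j']. unfold shift_map; simpl.
  intros Hn E. injection E as -> E. f_equal. nia.
Qed.

Lemma shift_map_diff_mod (n c : Z) (p : Z * Z) :
  0 <= c * n < n + 1 ->
  (snd (shift_map n c p) - fst (shift_map n c p)) mod (n + 1) = c * n.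
Proof.
  intros Hc. destruct p as [i j]; simpl.
  replace (j + (j - i + c) * n - i) with (c * n + (j - i) * (n + 1)) by ring.
  rewrite Z_mod_plus_full. now apply Z.mod_small.
Qed.

Lemma shift_map_surj (n c i x : Z) :
  n + 1 <> 0 -> (x - i) mod (n + 1) = c * n -> exists j, shift_map n c (i, j) = (i, x).
Proof.
  intros Hn Hx. exists (i + (x - i) / (n + 1)). unfold shift_map; simpl. f_equal.
  pose proof (Z.div_mod (x - i) (n + 1) Hn). lia.
Qed.

Section Conjugation.

Variables (n : Z) (w : Z -> Z).
Hypothesis hn : 1 <= n.
Hypothesis hw : in_fin_sym n w.

Lemma conj_gamma_eq (x : Z) :
  conj_gamma n w x = x + (n + 1) * (w (residue n x) - residue n x).
Proof.
  destruct hw as [[_ [_ hp]] hfin].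
  pose proof (residue_decomp n x hn) as Hx.
  pose proof (residue_bound n x hn) as Hr.
  unfold conj_gamma, gamma, gamma_inv, translation.
  set (r := residue n x) in *. set (q := (x - 1) / n) in *. rewrite Hx.
  rewrite <- Z.add_assoc, <- Z.mul_add_distr_l, (periodic_mul n w hp), residue_shift
    by lia.
  rewrite (residue_small n (w r)) by auto. ring.
Qed.

Lemma Inv_shift_map (c i j : Z) : 0 <= c <= 1 ->
  Inv n w (i, j) <-> Inv n (conj_gamma n w) (shift_map n c (i, j)).
Proof.
  intros Hc. destruct hw as [[_ [_ hp]] _].
  unfold Inv, shift_map; simpl. rewrite !conj_gamma_eq.
  replace (j + (j - i + c) * n) with (j + n * (j - i + c)) by ring.
  rewrite residue_shift by lia.
  assert (Hj : w (residue n j) - residue n j = w j - j)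
    by (rewrite (periodic_eq_residue n w hn hp j); ring).
  rewrite Hj.
  assert (Hneg : forall k, (n + 1) * k + c * n < 0 <-> k < 0)
    by (intros k; apply mul_add_neg_iff; nia).
  split; intros [Hi [Hij Hwij]]; rewrite (residue_small n i Hi) in *; split; auto.
  - pose proof (Hneg (w j - w i)). split; nia.
  - destruct (Z.eq_dec i j) as [<- | Hne]; [lia |].
    pose proof (Hneg (w j - w i)). pose proof (Hneg (j - i)). split; nia.
Qed.

Lemma bij_between_shift_map (c : Z) : 0 <= c <= 1 ->
  bij_between (Inv n w)
    (fun q => Inv n (conj_gamma n w) q /\ (snd q - fst q) mod (n + 1) = c * n)
    (shift_map n c).
Proof.
  intros Hc. split; [| split].
  - intros [i j] Hp. split; [now apply Inv_shift_map | apply shift_map_diff_mod; nia].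
  - intros p q _ _. apply shift_map_inj. lia.
  - intros [i x] [Hinv Hmod].
    destruct (shift_map_surj n c i x ltac:(lia) Hmod) as [j E].
    exists (i, j). split; [| exact E].
    apply (Inv_shift_map c); [exact Hc |]. now rewrite E.
Qed.

End Conjugation.

Theorem lemma6p9 (n : Z) (w : Z -> Z) (hn : 1 <= n) (hw : in_fin_sym n w) :
  bij_between (Inv n w) (Inv0 n (conj_gamma n w)) (alpha_map n) /\
  bij_between (Inv n w) (Inv_inf n (conj_gamma n w)) (beta_map n).
Proof.
  split.
  - refine (bij_between_iff _ _ _ _ _ _ _ _ _ (bij_between_shift_map n w hn hw 0 _));
      try reflexivity; [| lia].
    intros [i j]. unfold shift_map, alpha_map; simpl. now rewrite Z.add_0_r.
  - refine (bij_between_iff _ _ _ _ _ _ _ _ _ (bij_between_shift_map n w hn hw 1 _));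
      try reflexivity; [| lia].
    intros q. unfold Inv_inf, singular. now rewrite Z.mul_1_l.
Qed.
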